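(* For every integer $n\ge1$, $$\sum_{k=1}^n\frac{(-1)^k}{k^2\binom{2n}{k}}=H_{2n}^{(2)}+\frac32\sum_{k=1}^{n}\frac{(-1)^k}{k^2\binom{2k}{k}}-2\sum_{k=1}^{n}\frac{(-1)^k}{k\binom{2k}{k}}+4\sum_{k=1}^{n}\frac{(-1)^k}{(2k-1)\binom{2k}{k}}.$$
   Context: $H_m^{(2)}=\sum_{j=1}^m 1/j^2$. *)

From mathcomp Require Import all_boot all_order all_algebra.
Set Implicit Arguments. Unset Strict Implicit. Unset Printing Implicit Defensive.
Import Order.TTheory GRing.Theory Num.Theory.
Local Open Scope ring_scope.

Definition H2 (m : nat) : rat := \sum_(1 <= j < m.+1) 1 / (j%:R ^+ 2).

From mathcomp Require Import all_boot all_order all_algebra.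
From mathcomp Require Import ring lra zify.
Import Order.TTheory GRing.Theory Num.Theory.
Local Open Scope ring_scope.

(* Write L(n) = sum_{k=1}^n F(n,k) with
   F(n,k) = (-1)^k / (k^2 C(2n,k)), and R(n) for the right-hand side.  Both
   vanish at n = 0, so it suffices to show that they grow by the same
   increment Delta(n) when n becomes n+1.  For R this is just peeling off the
   last terms of its four sums (two of them for H^(2)_{2n+2}).  For L we use a
   Wilf-Zeilberger pair: an explicit certificate G(n,k), a rational function of
   k times (-1)^k / (k C(2n,k)), satisfies
       F(n+1,k) - F(n,k) = G(n,k+1) - G(n,k)      for 1 <= k <= n,
   so L(n+1) - L(n) telescopes to F(n+1,n+1) + G(n,n+1) - G(n,1), which is
   Delta(n) by a direct computation.  Both verifications are rational-function
   identities once every binomial coefficient is expressed through a single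
   one, using the ratios C(m,k+1)/C(m,k) and C(m+1,k)/C(m,k). *)

Section BinomialRatios.
Variable R : numFieldType.

(* C(m,k+1) = (m-k)/(k+1) C(m,k); both sides vanish when k > m. *)
Lemma bin_ratio_bottom (m k : nat) :
  ('C(m, k.+1)%:R : R) = (m%:R - k%:R) / (k%:R + 1) * 'C(m, k)%:R.
Proof.
have [le_km | lt_mk] := leqP k m; last first.
  by rewrite !bin_small ?mulr0 //; apply: ltnW.
have e : (k.+1%:R * 'C(m, k.+1)%:R : R) = (m - k)%:R * 'C(m, k)%:R.
  by rewrite -!natrM mul_bin_left.
rewrite natrB // -natr1 in e; rewrite mulrAC -e.
have nz : k%:R + 1 != 0 :> R by rewrite natr1 pnatr_eq0.
by field.
Qed.

Lemma bin_ratio_top (m k : nat) : (k <= m)%N ->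
  ('C(m.+1, k)%:R : R) = (m%:R + 1) / (m%:R + 1 - k%:R) * 'C(m, k)%:R.
Proof.
move=> le_km.
have e : (m.+1%:R * 'C(m, k)%:R : R) = (m.+1 - k)%:R * 'C(m.+1, k)%:R.
  by rewrite -!natrM (mul_bin_down m.+1).
rewrite natrB ?(leqW le_km) // -natr1 in e; rewrite mulrAC e.
have nz : m%:R + 1 - k%:R != 0 :> R.
  by rewrite natr1 -natrB ?pnatr_eq0 ?subn_eq0 -?ltnNge ?ltnS ?(leqW le_km).
by field.
Qed.

End BinomialRatios.

Definition summand (n k : nat) : rat := (-1) ^+ k / (k%:R ^+ 2 * 'C(2 * n, k)%:R).

(* The WZ certificate G(n,k) = (-1)^k (a k^2 + b k + c) / (k C(2n,k)), with
   coefficients a, b, c found by Gosper's algorithm. *)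
Definition wz_den (n : nat) : rat := (2 * n%:R + 1) * (2 * n%:R + 2).
Definition wz_a (n : nat) : rat := 1 / (2 * (n%:R + 1) * wz_den n).
Definition wz_c (n : nat) : rat := (4 * n%:R + 3) / wz_den n.
Definition wz_b (n : nat) : rat := - ((6 * n%:R + 3) / wz_den n + wz_a n) / (2 * n%:R + 1).

Definition certificate (n k : nat) : rat :=
  (-1) ^+ k * (wz_a n * k%:R ^+ 2 + wz_b n * k%:R + wz_c n) / (k%:R * 'C(2 * n, k)%:R).

Lemma double_succ (n : nat) : (2 * n.+1 = (2 * n).+2)%N.
Proof. by rewrite mulnS. Qed.

Lemma summand_step (n k : nat) : (1 <= k <= n)%N ->
  summand n.+1 k - summand n k = certificate n k.+1 - certificate n k.
Proof.
case/andP=> k_ge1 k_le_n.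
rewrite /summand /certificate double_succ bin_ratio_bottom.
rewrite !bin_ratio_top; try lia.
have C_gt0 : (0 : rat) < 'C(2 * n, k)%:R by rewrite ltr0n bin_gt0; lia.
have K_ge1 : (1 : rat) <= k%:R by rewrite ler1n.
have K_le_N : (k%:R : rat) <= n%:R by rewrite ler_nat.
rewrite -!natr1 natrM [(-1) ^+ k.+1]exprS.
move: ((-1) ^+ k : rat) => s.
rewrite /wz_b /wz_a /wz_c /wz_den.
field.
by repeat (apply/andP; split); lra.
Qed.

Definition central_sq (k : nat) : rat := (-1) ^+ k / (k%:R ^+ 2 * 'C(2 * k, k)%:R).
Definition central_lin (k : nat) : rat := (-1) ^+ k / (k%:R * 'C(2 * k, k)%:R).
Definition central_odd (k : nat) : rat :=
  (-1) ^+ k / (((2 * k)%:R - 1) * 'C(2 * k, k)%:R).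

Definition increment (n : nat) : rat :=
  1 / ((2 * n).+1%:R ^+ 2) + 1 / ((2 * n).+2%:R ^+ 2)
  + 3 / 2 * central_sq n.+1 - 2 * central_lin n.+1 + 4 * central_odd n.+1.

(* The boundary terms left by telescoping add up to Delta(n); this is a
   rational identity in n and C(2n,n+1), which is nonzero for n >= 1. *)
Lemma diagonal_step (n : nat) : (1 <= n)%N ->
  summand n.+1 n.+1 + certificate n n.+1 - certificate n 1 = increment n.
Proof.
move=> n_ge1.
rewrite /summand /certificate /increment /central_sq /central_lin /central_odd.
rewrite double_succ bin1 !bin_ratio_top; try lia.
have C_gt0 : (0 : rat) < 'C(2 * n, n.+1)%:R by rewrite ltr0n bin_gt0; lia.
have N_ge1 : (1 : rat) <= n%:R by rewrite ler1n.
rewrite -!natr1 !natrM [(-1) ^+ n.+1]exprS.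
move: ((-1) ^+ n : rat) => s.
rewrite /wz_b /wz_a /wz_c /wz_den.
field.
by repeat (apply/andP; split); lra.
Qed.

Definition lhs_sum (n : nat) : rat := \sum_(1 <= k < n.+1) summand n k.

Definition rhs_sum (n : nat) : rat :=
  H2 (2 * n)
  + 3 / 2 * \sum_(1 <= k < n.+1) central_sq k
  - 2 * \sum_(1 <= k < n.+1) central_lin k
  + 4 * \sum_(1 <= k < n.+1) central_odd k.

Lemma rhs_sum_succ (n : nat) : rhs_sum n.+1 = rhs_sum n + increment n.
Proof.
rewrite /rhs_sum /increment /H2 double_succ.
rewrite (big_nat_recr (2 * n).+2) // (big_nat_recr (2 * n).+1) //.
rewrite !(big_nat_recr n.+1) //=.
by ring.
Qed.

(* For n = 0 both sides are explicit rationals; otherwise telescope with the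
   WZ equation and close with the diagonal identity. *)
Lemma lhs_sum_succ (n : nat) : lhs_sum n.+1 = lhs_sum n + increment n.
Proof.
case: n => [|n]; first by rewrite /lhs_sum big_nat1 big_geq.
rewrite -diagonal_step // /lhs_sum (big_nat_recr n.+2) //=.
have telescoped : \sum_(1 <= k < n.+2) (summand n.+2 k - summand n.+1 k)
                  = certificate n.+1 n.+2 - certificate n.+1 1.
  by apply: telescope_sumr_eq => // k /andP [k_ge1 k_lt]; apply: summand_step; lia.
rewrite sumrB in telescoped.
by move: telescoped; lra.
Qed.

(* L(n) = R(n) for every n. *)
Theorem mainTheorem12 (n : nat) : (1 <= n)%N ->
  \sum_(1 <= k < n.+1) ((-1) ^+ k / ((k%:R ^+ 2) * ('C(2 * n, k))%:R) : rat)
  = H2 (2 * n)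
    + 3 / 2 * \sum_(1 <= k < n.+1) ((-1) ^+ k / ((k%:R ^+ 2) * ('C(2 * k, k))%:R) : rat)
    - 2 * \sum_(1 <= k < n.+1) ((-1) ^+ k / (k%:R * ('C(2 * k, k))%:R) : rat)
    + 4 * \sum_(1 <= k < n.+1) ((-1) ^+ k / (((2 * k)%:R - 1) * ('C(2 * k, k))%:R) : rat).
Proof.
move=> _; change (lhs_sum n = rhs_sum n).
elim: n => [|n IH]; first by rewrite /lhs_sum /rhs_sum /H2 !big_geq //; ring.
by rewrite lhs_sum_succ rhs_sum_succ IH.
Qed.
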